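(* Let $c>0$. Then for all $0<t<\pi/2$, $$\frac{2\int_{-t}^{t}e^{c\sin b}\,db}{\int_{0}^{2\pi}e^{c\cos a}\,da}<\frac{2t}{\pi}.$$
   Context: In the paper $c=\rho rs/(1-\rho^2)$ with $0<\rho<1$, $r,s>0$. *)

From Stdlib Require Import Reals.
From Coquelicot Require Import Coquelicot.

(* Write [E s] for the integral of [exp (c sin b)] over [[-s, s]].  Folding
   [[-s, s]] onto [[0, s]] gives [E s = ∫_0^s G] with
   [G y = exp (c sin y) + exp (c sin (- y))], a function strictly increasing on
   [[0, π/2]].  Shifting the variable by [π] and then by [π/2] shows that the
   integral of [exp (c cos a)] over a period equals [2 E (π/2)].  So the claim
   says that the mean of [G] over [[0, t]] is below its mean over [[0, π/2]],
   which holds for any strictly increasing continuous function. *)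
From Stdlib Require Import Reals Lra Psatz.
From Coquelicot Require Import Coquelicot.
Open Scope R_scope.

Ltac solve_continuous :=
  apply (ex_derive_continuous (K := R_AbsRing) (V := R_NormedModule));
  auto_derive; auto.

Lemma scal_R (x y : R) : scal x y = x * y.
Proof. reflexivity. Qed.

Section ChangeOfVariables.

Variable f : R -> R.
Hypothesis f_cont : forall x, continuous f x.

Lemma ex_RInt_of_continuous a b : ex_RInt f a b.
Proof. apply (ex_RInt_continuous (V := R_CompleteNormedModule)); auto. Qed.

Lemma continuous_reflect x : continuous (fun y => f (- y)) x.
Proof.
  apply (continuous_comp (U := R_UniformSpace) (V := R_UniformSpace)
           (W := R_UniformSpace) (fun y => - y)); [solve_continuous | auto].
Qed.

Lemma RInt_shift v a b :
  RInt f a b = RInt (fun y => f (y + v)) (a - v) (b - v).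
Proof.
  transitivity (RInt f (1 * (a - v) + v) (1 * (b - v) + v)); [f_equal; ring |].
  rewrite <- RInt_comp_lin by apply ex_RInt_of_continuous.
  apply RInt_ext; intros x _; rewrite scal_R, Rmult_1_l; f_equal; ring.
Qed.

Lemma RInt_reflect a b :
  RInt (fun y => f (- y)) a b = RInt f (- b) (- a).
Proof.
  assert (Hopp : RInt (fun y => opp (f (- y))) a b = RInt f (- a) (- b)).
  { apply is_RInt_unique, (is_RInt_comp_opp (V := R_NormedModule)).
    apply (RInt_correct (V := R_CompleteNormedModule)), ex_RInt_of_continuous. }
  rewrite <- (opp_RInt_swap f) by apply ex_RInt_of_continuous.
  rewrite <- Hopp, (RInt_opp (V := R_CompleteNormedModule)).
  - symmetry; apply opp_opp.
  - apply (ex_RInt_continuous (V := R_CompleteNormedModule)); intros.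
    apply continuous_reflect.
Qed.

Lemma RInt_symmetric s :
  RInt f (- s) s = RInt (fun y => f y + f (- y)) 0 s.
Proof.
  rewrite <- (RInt_Chasles f (- s) 0 s) by apply ex_RInt_of_continuous.
  rewrite (RInt_plus (V := R_CompleteNormedModule)).
  - rewrite RInt_reflect, Ropp_0; apply Rplus_comm.
  - apply ex_RInt_of_continuous.
  - apply (ex_RInt_continuous (V := R_CompleteNormedModule)); intros.
    apply continuous_reflect.
Qed.

End ChangeOfVariables.

Lemma exp_add_exp_opp_lt x y :
  x < y -> 0 < x + y -> exp x + exp (- x) < exp y + exp (- y).
Proof.
  intros Hxy Hsum. rewrite !exp_Ropp.
  assert (Hexp := exp_increasing _ _ Hxy).
  assert (Hprod : 1 < exp x * exp y).
  { rewrite <- exp_plus, <- exp_0; apply exp_increasing; lra. }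
  assert (Px := exp_pos x). assert (Py := exp_pos y).
  assert (Hdiff : exp y + / exp y - (exp x + / exp x)
                  = (exp y - exp x) * (exp x * exp y - 1) / (exp x * exp y))
    by (field; lra).
  assert (0 < (exp y - exp x) * (exp x * exp y - 1) / (exp x * exp y))
    by (apply Rdiv_lt_0_compat; nra).
  lra.
Qed.

Lemma exp_sin_even_part_lt c x y :
  0 < c -> 0 <= x -> x < y -> y <= PI / 2 ->
  exp (c * sin x) + exp (c * sin (- x)) < exp (c * sin y) + exp (c * sin (- y)).
Proof.
  intros Hc Hx Hxy Hy. assert (HPI := PI_RGT_0).
  rewrite !sin_neg.
  replace (c * - sin x) with (- (c * sin x)) by ring.
  replace (c * - sin y) with (- (c * sin y)) by ring.
  assert (sin x < sin y) by (apply sin_increasing_1; lra).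
  assert (0 <= sin x) by (apply sin_ge_0; lra).
  apply exp_add_exp_opp_lt; nra.
Qed.

(* For [f] increasing, [∫_a^t f < (t - a) f t <= (t - a) / (T - t) ∫_t^T f]. *)
Lemma RInt_increasing_mean_lt (f : R -> R) a t T :
  (forall x, a <= x <= T -> continuous f x) ->
  (forall x y, a <= x -> x < y -> y <= T -> f x < f y) ->
  a < t < T ->
  (T - a) * RInt f a t < (t - a) * RInt f a T.
Proof.
  intros f_cont f_incr [Hat HtT].
  assert (ex_f : forall u v, a <= u <= v -> v <= T -> ex_RInt f u v).
  { intros u v Hu Hv; apply (ex_RInt_continuous (V := R_CompleteNormedModule)).
    intros z; rewrite Rmin_left, Rmax_right by lra; intros; apply f_cont; lra. }
  assert (ex_const : forall u v, ex_RInt (fun _ => f t) u v).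
  { intros; apply (ex_RInt_continuous (V := R_CompleteNormedModule)).
    intros; apply continuous_const. }
  assert (Hleft : RInt f a t < (t - a) * f t).
  { rewrite <- (RInt_const (V := R_CompleteNormedModule)).
    apply RInt_lt; [lra | intros; apply continuous_const
                   | intros; apply f_cont; lra | intros; apply f_incr; lra]. }
  assert (Hright : (T - t) * f t <= RInt f t T).
  { rewrite <- (RInt_const (V := R_CompleteNormedModule)).
    apply RInt_le; [lra | apply ex_const | apply ex_f; lra | ].
    intros; apply Rlt_le, f_incr; lra. }
  rewrite <- (RInt_Chasles f a t T) by (apply ex_f; lra).
  change (plus (RInt f a t) (RInt f t T)) with (RInt f a t + RInt f t T).
  nra.
Qed.

Lemma RInt_exp_cos_period c :
  RInt (fun a => exp (c * cos a)) 0 (2 * PI)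
  = 2 * RInt (fun b => exp (c * sin b)) (- (PI / 2)) (PI / 2).
Proof.
  rewrite (RInt_shift (fun a => exp (c * cos a)) ltac:(intro; solve_continuous) PI).
  replace (0 - PI) with (- PI) by ring. replace (2 * PI - PI) with PI by ring.
  rewrite RInt_symmetric by (intro; solve_continuous).
  transitivity (RInt (fun y => 2 * exp (- (c * cos y))) 0 PI).
  { apply RInt_ext; intros y _; rewrite !neg_cos, cos_neg.
    replace (c * - cos y) with (- (c * cos y)) by ring.
    lra. }
  transitivity (2 * RInt (fun y => exp (- (c * cos y))) 0 PI).
  { apply (RInt_scal (V := R_CompleteNormedModule)).
    apply (ex_RInt_continuous (V := R_CompleteNormedModule)).
    intros; solve_continuous. }
  f_equal.
  rewrite (RInt_shift (fun y => exp (- (c * cos y)))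
            ltac:(intro; solve_continuous) (PI / 2)).
  replace (0 - PI / 2) with (- (PI / 2)) by ring.
  replace (PI - PI / 2) with (PI / 2) by field.
  apply RInt_ext; intros y _.
  rewrite cos_plus, cos_PI2, sin_PI2; f_equal; ring.
Qed.

Theorem lemma3p2 (c : R) (hc : 0 < c) :
  forall t : R, 0 < t < PI / 2 ->
    2 * RInt (fun b => exp (c * sin b)) (- t) t
      / RInt (fun a => exp (c * cos a)) 0 (2 * PI)
    < 2 * t / PI.
Proof.
  intros t Ht. assert (HPI := PI_RGT_0).
  set (G := fun y => exp (c * sin y) + exp (c * sin (- y))).
  assert (G_cont : forall x, continuous G x) by (intro; unfold G; solve_continuous).
  assert (G_incr : forall x y, 0 <= x -> x < y -> y <= PI / 2 -> G x < G y)
    by (intros; apply exp_sin_even_part_lt; auto).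
  rewrite RInt_exp_cos_period, !RInt_symmetric by (intro; solve_continuous).
  fold G.
  assert (Hmean := RInt_increasing_mean_lt G 0 t (PI / 2)
                     (fun x _ => G_cont x) G_incr Ht).
  assert (Hpos : 0 < RInt G 0 t).
  { apply RInt_gt_0; [lra | | auto].
    intros; unfold G; assert (h := exp_pos (c * sin x));
      assert (h' := exp_pos (c * sin (- x))); lra. }
  assert (0 < RInt G 0 (PI / 2)) by nra.
  apply Rmult_lt_reg_r with (2 * RInt G 0 (PI / 2) * PI); [nra |].
  unfold Rdiv; field_simplify; nra.
Qed.
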